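(* Let $p,k\in\mathbb N$ and a real $\alpha<1$ be fixed. Let $X$ be a set of cardinality $r$ and, for every $p$-subset $S\in\binom{X}{p}$, let $\mathcal L_S$ be a collection of $p$-subsets of $X$ with $|\mathcal L_S|\leq k$. Suppose that no $p$-subset of $X$ belongs to more than $r^\alpha$ of the collections $\mathcal L_S$. Then, when $r$ is sufficiently large (in terms of $p,k,\alpha$), a uniformly random permutation $\sigma$ of $X$ satisfies $\sigma(S)\notin\mathcal L_S$ for every $S\in\binom Xp$ with probability at least $\left(1-2k/\binom rp\right)^{\binom rp}$, and this lower bound equals $e^{-2k}+o(1)$ as $r\to\infty$.
   Context: $\binom{X}{p}$ denotes the set of all $p$-element subsets of $X$, and $\sigma(S)=\{\sigma(x):x\in S\}$. *)

From mathcomp Require Import all_boot fingroup perm.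
From Stdlib Require Import Reals.
Set Implicit Arguments. Unset Strict Implicit. Unset Printing Implicit Defensive.

Definition good_perms (T : finType) (p : nat) (L : {set T} -> {set {set T}}) :
  {set {perm T}} :=
  [set s : {perm T} | [forall S : {set T}, (#|S| == p) ==> (s @: S \notin L S)]].

Definition prob_good (T : finType) (p : nat) (L : {set T} -> {set {set T}}) : R :=
  (INR #|good_perms p L| / INR #|[set: {perm T}]|)%R.

Definition lower_bound (r p k : nat) : R :=
  ((1 - 2 * INR k / INR 'C(r, p)) ^ 'C(r, p))%R.

From mathcomp Require Import all_boot fingroup perm.
From Stdlib Require Import Reals Lra.
Set Implicit Arguments. Unset Strict Implicit. Unset Printing Implicit Defensive.

(* Apply the lopsided Lovász local lemma, in counting form, to the events
   "sigma(S) = A" for A in L_S.  Composing with a permutation that moves A onto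
   another p-set B and fixes every point outside A and B preserves the
   avoidance of every event whose pair of sets is disjoint from (S, A); hence,
   conditioned on avoiding such events, sigma(S) = A has probability at most
   1/C(r,p), and only the events whose sets meet S or A count as dependencies.
   There are at most p C(r-1,p-1) (k + r^alpha) = (p^2/r) C(r,p) (k + r^alpha)
   of those, i.e. at most C(r,p)/4 for large r, so x = 2/C(r,p) satisfies the
   local lemma condition and the at most k C(r,p) events are all avoided with
   probability at least (1 - x)^(k C(r,p)) >= (1 - 2k/C(r,p))^C(r,p).  The
   limit e^(-2k) is that of (1 - c/m)^m as m grows. *)

Lemma Rdiv_le_0_compat (a b : R) : (0 <= a)%R -> (0 < b)%R -> (0 <= a / b)%R.
Proof. by move=> a_ge0 b_gt0; apply: Rmult_le_pos => //; apply/Rlt_le/Rinv_0_lt_compat. Qed.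

Lemma exp_pow (x : R) (n : nat) : (exp x ^ n = exp (INR n * x))%R.
Proof. by rewrite -Rpower_pow; [rewrite /Rpower ln_exp | exact: exp_pos]. Qed.

Lemma pow_le1_decr (y : R) (m n : nat) :
  (0 <= y <= 1)%R -> (m <= n)%N -> (y ^ n <= y ^ m)%R.
Proof.
move=> y01 /subnKC <-; rewrite pow_add.
have := pow_le y m (proj1 y01).
have : (y ^ (n - m) <= 1)%R by rewrite -(pow1 (n - m)); apply: pow_incr; lra.
nra.
Qed.

Lemma bernoulli_sub (x : R) (d : nat) :
  (0 <= x <= 1)%R -> (1 - INR d * x <= (1 - x) ^ d)%R.
Proof.
move=> x01; elim: d => [|d IH]; first by rewrite /=; lra.
rewrite S_INR /=; have := pow_le (1 - x) d ltac:(lra); have := pos_INR d; nra.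
Qed.

Lemma one_sub_div_pow_bounds (c : R) (n : nat) : (0 <= c < INR n)%R ->
  (exp (- c) - c ^ 2 / (INR n - c) <= (1 - c / INR n) ^ n <= exp (- c))%R.
Proof.
move=> c_bd; have n_gt0 : (0 < INR n)%R by lra.
have inv_eq : (1 - c / INR n = / (INR n / (INR n - c)))%R by field; lra.
split.
- set t := (c / (INR n - c))%R.
  have t_eq : (INR n / (INR n - c) = 1 + t)%R by rewrite /t; field; lra.
  have t_ge0 : (0 <= c * t)%R.
    by apply: Rmult_le_pos; [lra | apply: Rdiv_le_0_compat; lra].
  have exp_le : (exp (- t) <= 1 - c / INR n)%R.
    rewrite exp_Ropp inv_eq t_eq; apply: Rinv_le_contravar; last exact: exp_ineq1_le.
    by rewrite -t_eq; apply: Rdiv_lt_0_compat; lra.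
  have := pow_incr _ _ n (conj (Rlt_le _ _ (exp_pos (- t))) exp_le).
  rewrite exp_pow (_ : INR n * - t = - c + - (c * t))%R; last by rewrite /t; field; lra.
  rewrite exp_plus (_ : c ^ 2 / (INR n - c) = c * t)%R; last by rewrite /t; field; lra.
  have : (exp (- c) <= 1)%R.
    by rewrite exp_Ropp -Rinv_1; apply: Rinv_le_contravar; have := exp_ineq1_le c; lra.
  have := exp_ineq1_le (- (c * t)); have := exp_pos (- c); nra.
- have base : (0 <= 1 - c / INR n <= exp (- c / INR n))%R.
    split; first by rewrite inv_eq; apply/Rlt_le/Rinv_0_lt_compat/Rdiv_lt_0_compat; lra.
    by have := exp_ineq1_le (- c / INR n); rewrite /Rdiv; lra.
  apply: Rle_trans (pow_incr _ _ n base) _.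
  by rewrite exp_pow (_ : INR n * (- c / INR n) = - c)%R; [lra | field; lra].
Qed.

Lemma cv_one_sub_div_pow (c : R) (u : nat -> nat) : (0 <= c)%R ->
  (forall M : nat, exists N : nat, forall r, (N <= r)%N -> (M <= u r)%N) ->
  Un_cv (fun r => (1 - c / INR (u r)) ^ u r)%R (exp (- c)).
Proof.
move=> c_ge0 u_oo eps eps_gt0.
have [M M_large] := INR_unbounded (c + c ^ 2 / eps).
have [N N_large] := u_oo M.
exists N => r /leP /N_large /leP /le_INR M_le.
have sq_div : (c ^ 2 / eps * eps = c ^ 2)%R by field; lra.
have sq_ge0 : (0 <= c ^ 2 / eps)%R by apply: Rdiv_le_0_compat; nra.
have c_bd : (0 <= c < INR (u r))%R by lra.
have [lo hi] := one_sub_div_pow_bounds c_bd.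
have err_eq : (c ^ 2 / (INR (u r) - c) * (INR (u r) - c) = c ^ 2)%R by field; lra.
have err_lt : (c ^ 2 / (INR (u r) - c) < eps)%R by nra.
by rewrite /R_dist Rabs_left1; lra.
Qed.

Lemma Rpower_sublinear (alpha K : R) : (alpha < 1)%R -> (0 < K)%R ->
  exists N : nat, forall r : nat, (N <= r)%N -> (K * Rpower (INR r) alpha <= INR r)%R.
Proof.
move=> alpha_lt1 K_gt0.
have [N N_large] := INR_unbounded (Rpower K (/ (1 - alpha))).
exists N => r /leP /le_INR N_le.
have r_large : (Rpower K (/ (1 - alpha)) < INR r)%R by lra.
have r_gt0 : (0 < INR r)%R.
  by have := exp_pos (/ (1 - alpha) * ln K); rewrite /Rpower in r_large; lra.
have K_le : (K <= Rpower (INR r) (1 - alpha))%R.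
  have -> : K = Rpower (Rpower K (/ (1 - alpha))) (1 - alpha).
    by rewrite Rpower_mult Rinv_l ?Rpower_1 //; lra.
  by apply: Rle_Rpower_l; [lra | split; [exact: exp_pos | lra]].
have r_eq : INR r = (Rpower (INR r) alpha * Rpower (INR r) (1 - alpha))%R.
  by rewrite -Rpower_plus (_ : alpha + (1 - alpha) = 1)%R; [rewrite Rpower_1 | ring].
have pow_gt0 : (0 < Rpower (INR r) alpha)%R by apply: exp_pos.
rewrite {2}r_eq; nra.
Qed.

Lemma mul_bin_diag_pred (r p : nat) : (0 < p)%N -> r * 'C(r.-1, p.-1) = p * 'C(r, p).
Proof. by case: p => // p _; rewrite mul_bin_diag. Qed.

Lemma leq_mul_bin (r p : nat) : (0 < p <= r)%N -> (r <= p * 'C(r, p))%N.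
Proof.
case/andP => p_gt0 le_pr; rewrite -mul_bin_diag_pred // leq_pmulr // bin_gt0.
by rewrite -!subn1 leq_sub2r.
Qed.

Lemma card_cover_le (X Y : finType) (W : {set X}) (S : {set Y}) (F : Y -> {set X}) (b : R) :
  {in W, forall w, exists2 y, y \in S & w \in F y} ->
  {in S, forall y, (INR #|F y| <= b)%R} ->
  (INR #|W| <= INR #|S| * b)%R.
Proof.
move=> cover F_le.
have W_sub : W \subset \bigcup_(y in S) F y.
  by apply/subsetP => w /cover [y yS wF]; apply/bigcupP; exists y.
apply: Rle_trans (le_INR _ _ (leP (subset_leq_card W_sub))) _.
rewrite -[#|S|]sum1_card; pose K (U : {set X}) (v : nat) := (INR #|U| <= INR v * b)%R.
apply: (big_rec2 K) => [|y U v yS]; rewrite /K; first by rewrite cards0 /=; lra.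
have cardU : (#|F y :|: U| <= #|F y| + #|U|)%N by rewrite cardsU leq_subr.
move/leP/le_INR: cardU; rewrite !plus_INR /=; have := F_le y yS; nra.
Qed.

Lemma card_meeting_le (X Y : finType) (W : {set X}) (f : X -> {set Y}) (B : {set Y}) (b : R) :
  (forall y, INR #|[set w in W | y \in f w]| <= b)%R ->
  (INR #|[set w in W | ~~ [disjoint B & f w]]| <= INR #|B| * b)%R.
Proof.
move=> f_le; apply: card_cover_le => [w /[!inE] /andP [wW]|y _]; last exact: f_le.
by rewrite -setI_eq0 => /set0Pn [y /setIP [yB yf]]; exists y; rewrite ?inE ?wW.
Qed.

Section LopsidedLocalLemma.
Variables (Omega I : finType) (E : I -> {set Omega}).

Definition avoiding (J : {set I}) : {set Omega} := [set w | [forall j in J, w \notin E j]].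

Lemma avoiding0 : avoiding set0 = setT.
Proof. by apply/setP => w; rewrite !inE; apply/forall_inP => j; rewrite inE. Qed.

Lemma avoidingS (J K : {set I}) : J \subset K -> avoiding K \subset avoiding J.
Proof.
move=> sJK; apply/subsetP => w /[!inE] /forall_inP wK.
by apply/forall_inP => j /(subsetP sJK); apply: wK.
Qed.

Lemma card_avoidingU1 (i : I) (J : {set I}) :
  INR #|avoiding (i |: J)| = (INR #|avoiding J| - INR #|E i :&: avoiding J|)%R.
Proof.
have -> : avoiding (i |: J) = avoiding J :\: E i.
  apply/setP => w; rewrite !inE; apply/forall_inP/andP => [wJ|[wi /forall_inP wJ] j].
    split; first by apply: wJ; rewrite !inE eqxx.
    by apply/forall_inP => j jJ; apply: wJ; rewrite !inE jJ orbT.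
  by rewrite !inE => /orP [/eqP -> //|/wJ].
rewrite -(cardsID (E i) (avoiding J)) plus_INR setIC; lra.
Qed.

Variables (adj : I -> I -> bool) (D : {set I}) (x q : R).
Hypothesis x01 : (0 <= x <= 1)%R.
Hypothesis lopsided : forall (i : I) (J : {set I}), i \in D -> J \subset D ->
  {in J, forall j, ~~ adj i j} -> (INR #|E i :&: avoiding J| <= q * INR #|avoiding J|)%R.
Hypothesis q_small : forall i, i \in D -> (q <= x * (1 - x) ^ #|[set j in D | adj i j]|)%R.

(* Counting form of "P(E_i | no E_j, j in J) <= x" for conditioning sets of size < n. *)
Definition conditional_bound (n : nat) := forall (J : {set I}) (i : I),
  (#|J| < n)%N -> J \subset D -> i \in D -> i \notin J ->
  (INR #|E i :&: avoiding J| <= x * INR #|avoiding J|)%R.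

Lemma avoiding_grow (n : nat) (K M : {set I}) : conditional_bound n ->
  K :|: M \subset D -> [disjoint K & M] -> (#|K :|: M| <= n)%N ->
  ((1 - x) ^ #|M| * INR #|avoiding K| <= INR #|avoiding (K :|: M)|)%R.
Proof.
move=> bound_n; have [m cardM] : {m | #|M| = m} by exists #|M|.
rewrite cardM; elim: m M cardM => [|m IH] M cardM sKMD dKM le_n.
  by move/eqP: cardM; rewrite cards_eq0 => /eqP ->; rewrite setU0 /=; lra.
have [a aM] : {a | a \in M} by apply/sigW/set0Pn; rewrite -card_gt0 cardM.
have KM_eq : K :|: M = a |: (K :|: M :\ a) by rewrite setUCA setD1K.
have aK : a \notin K :|: M :\ a by rewrite !inE eqxx (disjointFl dKM aM).
have sKM'D : K :|: M :\ a \subset D by apply: subset_trans sKMD; rewrite setUS ?subD1set.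
have lt_n : (#|K :|: M :\ a| < n)%N by move: le_n; rewrite KM_eq cardsU1 aK.
have cardM' : #|M :\ a| = m by move: cardM; rewrite (cardsD1 a M) aM add1n => -[].
have grow := IH _ cardM' sKM'D (disjointWr (subD1set M a) dKM) (ltnW lt_n).
have aD : a \in D by apply: (subsetP sKMD); rewrite inE aM orbT.
have step := bound_n _ a lt_n sKM'D aD aK.
rewrite KM_eq card_avoidingU1 /=; nra.
Qed.

Lemma conditional_boundS (n : nat) : conditional_bound n -> conditional_bound n.+1.
Proof.
move=> bound_n J i le_n sJD iD iJ.
set J1 := [set j in J | adj i j]; set J2 := [set j in J | ~~ adj i j].
have J_eq : J2 :|: J1 = J by apply/setP => j; rewrite !inE; case: (j \in J); case: (adj i j).
have dJ : [disjoint J2 & J1].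
  by rewrite -setI_eq0; apply/eqP/setP => j; rewrite !inE; case: (adj i j); rewrite ?andbF.
have sJ2J : J2 \subset J by rewrite -J_eq subsetUl.
have grow := avoiding_grow (K := J2) (M := J1) bound_n; rewrite J_eq in grow.
have {}grow := grow sJD dJ le_n.
have sJ2D : J2 \subset D by apply: subset_trans sJD.
have cut : (INR #|E i :&: avoiding J| <= INR #|E i :&: avoiding J2|)%R.
  by apply/le_INR/leP/subset_leq_card/setIS/avoidingS.
have lop : (INR #|E i :&: avoiding J2| <= q * INR #|avoiding J2|)%R.
  by apply: lopsided => // j; rewrite inE => /andP [].
have deg : (#|J1| <= #|[set j in D | adj i j]|)%N.
  by apply/subset_leq_card/subsetP => j /[!inE] /andP [/(subsetP sJD) -> ->].
have g2_ge0 := pos_INR #|avoiding J2|.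
apply: (Rle_trans _ _ _ cut); apply: (Rle_trans _ _ _ lop).
apply: Rle_trans (Rmult_le_compat_r _ _ _ g2_ge0 (q_small iD)) _.
rewrite Rmult_assoc; apply: Rmult_le_compat_l; first lra.
apply: Rle_trans grow; apply: Rmult_le_compat_r => //; apply: pow_le1_decr deg; lra.
Qed.

Lemma conditional_bound_all (n : nat) : conditional_bound n.
Proof.
elim: n => [J i|n]; [by rewrite ltn0 | exact: conditional_boundS].
Qed.

Theorem lopsided_local_lemma : ((1 - x) ^ #|D| * INR #|Omega| <= INR #|avoiding D|)%R.
Proof.
have := avoiding_grow (K := set0) (M := D) (@conditional_bound_all #|D|).
by rewrite set0U avoiding0 cardsT -setI_eq0 set0I; apply.
Qed.

End LopsidedLocalLemma.

Section PermutationEvents.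
Variable T : finType.

Definition maps_to (i : {set T} * {set T}) : {set {perm T}} :=
  [set s : {perm T} | s @: i.1 == i.2].

Lemma imset_permM (s t : {perm T}) (X : {set T}) : (s * t)%g @: X = t @: (s @: X).
Proof. by rewrite -imset_comp; apply: eq_imset => y; rewrite permM. Qed.

Lemma mem_imset_tperm (a b y : T) (A : {set T}) : (y \in tperm a b @: A) = (tperm a b y \in A).
Proof. by rewrite -preim_permV tpermV inE. Qed.

Lemma perm_onto_exists (A B : {set T}) : #|A| = #|B| ->
  exists2 pi : {perm T}, perm_on (A :|: B) pi & pi @: A = B.
Proof.
move=> cardAB; have [n] := ubnP #|A :\: B|; elim: n A cardAB => // n IH A cardAB ltAB.
have [AB0|[a]] := set_0Vmem (A :\: B).
  have sAB : A \subset B by rewrite -setD_eq0 AB0.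
  have -> : A = B by apply/eqP; rewrite eqEcard sAB cardAB leqnn.
  by exists 1%g; [exact: perm_on1 | exact: imset_perm1].
rewrite inE => /andP [aB aA].
have [b] : {b | b \in B :\: A}.
  apply/sigW/set0Pn; rewrite -card_gt0 cardsD -cardAB setIC -cardsD card_gt0.
  by apply/set0Pn; exists a; rewrite inE aB.
rewrite inE => /andP [bA bB].
set t := tperm a b.
have tA_B : t @: A :\: B = (A :\: B) :\ a.
  apply/setP => y; rewrite !inE mem_imset_tperm.
  case: tpermP => [->|->|/eqP/negbTE ya _]; last by rewrite ya.
    by rewrite eqxx (negbTE bA) andbF.
  by rewrite bB /= andbF.
have [pi pi_on pi_tA] : exists2 pi : {perm T}, perm_on (t @: A :|: B) pi & pi @: (t @: A) = B.
  apply: IH; first by rewrite card_imset //; exact: perm_inj.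
  by move: ltAB; rewrite tA_B (cardsD1 a (A :\: B)) in_setD aB aA.
exists (t * pi)%g; last by rewrite imset_permM.
apply: perm_onM.
  apply: subset_trans (tperm_on a b) _.
  by apply/subsetP => y /[!inE] /orP [/eqP ->|/eqP ->]; rewrite ?aA ?bB ?orbT.
apply: subset_trans pi_on _; apply/subsetP => y.
rewrite !inE mem_imset_tperm => /orP [|->]; last by rewrite orbT.
by case: tpermP => [->|->|_ _ ->]; rewrite ?aA ?bB ?orbT // => ->.
Qed.

Lemma avoiding_mulr (J : {set {set T} * {set T}}) (S A : {set T}) (s pi : {perm T}) :
  {in J, forall j : {set T} * {set T}, [disjoint S & j.1] && [disjoint A & j.2]} ->
  perm_on (A :|: (s * pi)%g @: S) pi ->
  s \in avoiding maps_to J -> (s * pi)%g \in avoiding maps_to J.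
Proof.
move=> dJ pi_on /[!inE] /forall_inP s_avoids; apply/forall_inP => j jJ.
rewrite inE; apply: contra (s_avoids j jJ) => /[!inE] /eqP sj.
have /andP [dS dA] := dJ j jJ.
apply/eqP; rewrite -sj; apply: eq_in_imset => y yj.
have z_j2 : (s * pi)%g y \in j.2 by rewrite -sj imset_f.
have z_out : (s * pi)%g y \notin A :|: (s * pi)%g @: S.
  rewrite inE negb_or (disjointFl dA z_j2) /=.
  by apply/imsetP => -[y' y'S /perm_inj eq_y]; move: yj; rewrite eq_y (disjointFr dS y'S).
by apply: (@perm_inj _ pi); rewrite (out_perm pi_on z_out) permM.
Qed.

Lemma card_maps_to_avoiding (i : {set T} * {set T}) (J : {set {set T} * {set T}}) :
  #|i.1| = #|i.2| ->
  {in J, forall j : {set T} * {set T}, [disjoint i.1 & j.1] && [disjoint i.2 & j.2]} ->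
  ('C(#|T|, #|i.1|) * #|maps_to i :&: avoiding maps_to J| <= #|avoiding maps_to J|)%N.
Proof.
move=> card_i dJ; set G := avoiding maps_to J; set P := [set B : {set T} | #|B| == #|i.1|].
have -> : #|G| = (\sum_(B in P) #|[set s in G | s @: i.1 == B]|)%N.
  rewrite -[LHS]sum1_card (partition_big (fun s : {perm T} => s @: i.1) (mem P)) /=.
    by apply: eq_bigr => B _; rewrite -sum1_card; apply: eq_bigl => s; rewrite !inE.
  by move=> s _; rewrite inE card_imset //; exact: perm_inj.
rewrite -card_draws -sum_nat_const; apply: leq_sum => B /[!inE] /eqP card_B.
have [pi pi_on pi_i2] := perm_onto_exists (etrans (esym card_i) (esym card_B)).
rewrite -(card_imset _ (mulIg pi)); apply/subset_leq_card/subsetP => t /imsetP [s].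
move=> /setIP [/[1!inE] /eqP s_i s_avoids] ->.
have s_B : (s * pi)%g @: i.1 = B by rewrite imset_permM s_i.
apply/setIdP; split; last by rewrite s_B.
by apply: avoiding_mulr dJ _ s_avoids; rewrite s_B.
Qed.

Lemma card_psets_containing (p : nat) (y : T) : (0 < p)%N ->
  (#|[set S : {set T} | (#|S| == p) && (y \in S)]| <= 'C(#|T|.-1, p.-1))%N.
Proof.
move=> p_gt0; rewrite -(cardsC1 y) -cards_draws.
apply: leq_trans (leq_imset_card (fun A => y |: A) _); apply/subset_leq_card/subsetP => S.
rewrite inE => /andP [/eqP card_S yS]; apply/imsetP; exists (S :\ y); last by rewrite setD1K.
rewrite inE; apply/andP; split; first by apply/subsetP => z; rewrite !inE => /andP [].
by rewrite -card_S (cardsD1 y S) yS.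
Qed.

End PermutationEvents.

Arguments maps_to {T} i.

Section AvoidingForbiddenImages.
Variables (T : finType) (p k : nat) (L : {set T} -> {set {set T}}) (rho : R).
Hypothesis p_gt0 : (0 < p)%N.
Hypothesis L_small : forall S : {set T}, #|S| = p ->
  (#|L S| <= k)%N /\ (forall A : {set T}, A \in L S -> #|A| = p).
Hypothesis L_rare : forall A : {set T}, #|A| = p ->
  (INR #|[set S : {set T} | (#|S| == p) && (A \in L S)]| <= rho)%R.
Hypothesis rho_ge0 : (0 <= rho)%R.
Hypothesis many_psets : (2 * k + 3 <= 'C(#|T|, p))%N.
Hypothesis T_large : (4 * (INR p * INR p) * (INR k + rho) <= INR #|T|)%R.

Definition forbidden : {set {set T} * {set T}} :=
  [set i : {set T} * {set T} | (#|i.1| == p) && (i.2 \in L i.1)].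

Definition overlap (i j : {set T} * {set T}) : bool :=
  ~~ [disjoint i.1 & j.1] || ~~ [disjoint i.2 & j.2].

Lemma mem_forbidden (i : {set T} * {set T}) : i \in forbidden -> #|i.1| = p /\ #|i.2| = p.
Proof. by rewrite inE => /andP [/eqP card_i1 /(proj2 (L_small card_i1))]. Qed.

Lemma good_perms_avoiding : good_perms p L = avoiding maps_to forbidden.
Proof.
apply/setP => s; rewrite !inE; apply/forallP/forall_inP => [good i|avoids S].
  rewrite !inE => /andP [/eqP card_i1 i2L]; apply: contraL i2L => /eqP <-.
  by have := good i.1; rewrite card_i1 eqxx.
apply/implyP => /eqP card_S; apply: contraT; rewrite negbK => sSL.
by have := avoids (S, s @: S); rewrite !inE card_S eqxx sSL eqxx => /(_ isT).
Qed.

Lemma card_forbidden_fst (S : {set T}) : #|S| = p ->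
  (#|[set j in forbidden | j.1 == S]| <= k)%N.
Proof.
move=> card_S; apply: leq_trans (proj1 (L_small card_S)).
apply: leq_trans (leq_imset_card (pair S) _); apply/subset_leq_card/subsetP => -[S' A].
by rewrite !inE /= => /andP [/andP [_ AL] /eqP eq_S]; subst S'; apply: imset_f.
Qed.

Lemma card_forbidden_snd (A : {set T}) : #|A| = p ->
  (INR #|[set j in forbidden | j.2 == A]| <= rho)%R.
Proof.
move=> card_A; apply: Rle_trans (L_rare card_A); apply/le_INR/leP.
apply: leq_trans (leq_imset_card (fun S => (S, A)) _); apply/subset_leq_card/subsetP => -[S A'].
rewrite !inE /= => /andP [/andP [card_S A'L] /eqP eq_A]; subst A'.
by apply/imsetP; exists S; rewrite ?inE ?card_S.
Qed.

Lemma card_psets_large : (2 * INR k + 3 <= INR 'C(#|T|, p))%R.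
Proof.
by move/leP/le_INR: many_psets; rewrite plus_INR -multE mult_INR /=; lra.
Qed.

Lemma card_T_gt0 : (0 < INR #|T|)%R.
Proof.
have : (0 < 'C(#|T|, p))%N by apply: leq_trans many_psets; rewrite addn3.
by rewrite bin_gt0 => le_pT; apply/lt_0_INR/ltP/(leq_trans p_gt0 le_pT).
Qed.

Lemma card_forbidden : (#|forbidden| <= 'C(#|T|, p) * k)%N.
Proof.
apply/leP/INR_le; rewrite mult_INR -card_draws.
apply: (card_cover_le (F := fun S => [set j in forbidden | j.1 == S])) => [i i_forb|S].
  have [card_i1 _] := mem_forbidden i_forb.
  by exists i.1; [rewrite inE card_i1 | apply/setIdP].
by rewrite inE => /eqP /card_forbidden_fst /leP /le_INR.
Qed.

Lemma card_forbidden_containing (f : {set T} * {set T} -> {set T}) (b : R) :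
  (0 <= b)%R -> {in forbidden, forall j, #|f j| = p} ->
  (forall B : {set T}, #|B| = p -> INR #|[set j in forbidden | f j == B]| <= b)%R ->
  forall y : T, (INR #|[set j in forbidden | y \in f j]| <= INR 'C(#|T|.-1, p.-1) * b)%R.
Proof.
move=> b_ge0 card_f fibre_le y.
apply: Rle_trans (_ : _ <= INR #|[set S : {set T} | (#|S| == p) && (y \in S)]| * b)%R _.
  apply: (card_cover_le (F := fun B => [set j in forbidden | f j == B])) => [j|B].
    by case/setIdP => j_forb y_j; exists (f j); [rewrite inE card_f ?eqxx | apply/setIdP].
  by rewrite inE => /andP [/eqP /fibre_le].
by apply: Rmult_le_compat_r => //; apply/le_INR/leP/card_psets_containing.
Qed.

Lemma card_forbidden_containing_fst (y : T) :
  (INR #|[set j in forbidden | y \in j.1]| <= INR 'C(#|T|.-1, p.-1) * INR k)%R.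
Proof.
apply: card_forbidden_containing; first exact: pos_INR.
  by move=> j /mem_forbidden [].
by move=> B /card_forbidden_fst /leP /le_INR.
Qed.

Lemma card_forbidden_containing_snd (y : T) :
  (INR #|[set j in forbidden | y \in j.2]| <= INR 'C(#|T|.-1, p.-1) * rho)%R.
Proof.
apply: card_forbidden_containing => //; first by move=> j /mem_forbidden [].
exact: card_forbidden_snd.
Qed.

Lemma card_overlap (i : {set T} * {set T}) : i \in forbidden ->
  (4 * INR #|[set j in forbidden | overlap i j]| <= INR 'C(#|T|, p))%R.
Proof.
case/mem_forbidden => card_i1 card_i2.
set M1 := [set j in forbidden | ~~ [disjoint i.1 & j.1]].
set M2 := [set j in forbidden | ~~ [disjoint i.2 & j.2]].
have le_M12 : (#|[set j in forbidden | overlap i j]| <= #|M1| + #|M2|)%N.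
  apply: leq_trans (_ : _ <= #|M1 :|: M2|)%N _; last by rewrite cardsU leq_subr.
  apply/subset_leq_card/subsetP => j; rewrite !inE /overlap.
  by case/andP => -> /orP [] ->; rewrite ?orbT.
have M1_le := card_meeting_le i.1 card_forbidden_containing_fst.
have M2_le := card_meeting_le i.2 card_forbidden_containing_snd.
rewrite card_i1 -/M1 in M1_le; rewrite card_i2 -/M2 in M2_le.
move/leP/le_INR: le_M12; rewrite plus_INR => le_M12.
have := f_equal INR (mul_bin_diag_pred #|T| p_gt0); rewrite -!multE !mult_INR => rc.
have key : (INR #|T| * (4 * (INR p * (INR 'C(#|T|.-1, p.-1) * (INR k + rho))))
            <= INR #|T| * INR 'C(#|T|, p))%R.
  rewrite (_ : INR #|T| * _ = 4 * INR p * (INR k + rho) * (INR #|T| * INR 'C(#|T|.-1, p.-1)))%R;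
    last by ring.
  rewrite rc (_ : 4 * INR p * (INR k + rho) * (INR p * INR 'C(#|T|, p))
                  = 4 * (INR p * INR p) * (INR k + rho) * INR 'C(#|T|, p))%R; last by ring.
  by apply: Rmult_le_compat_r; [exact: pos_INR | exact: T_large].
have := Rmult_le_reg_l _ _ _ card_T_gt0 key; lra.
Qed.

Lemma lopsided_forbidden (i : {set T} * {set T}) (J : {set {set T} * {set T}}) :
  i \in forbidden -> {in J, forall j, ~~ overlap i j} ->
  (INR #|maps_to i :&: avoiding maps_to J|
     <= / INR 'C(#|T|, p) * INR #|avoiding maps_to J|)%R.
Proof.
case/mem_forbidden => card_i1 card_i2 no_overlap.
have dJ : {in J, forall j : {set T} * {set T}, [disjoint i.1 & j.1] && [disjoint i.2 & j.2]}.
  by move=> j /no_overlap; rewrite /overlap negb_or !negbK.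
have := card_maps_to_avoiding (etrans card_i1 (esym card_i2)) dJ.
rewrite card_i1 => /leP /le_INR; rewrite -multE mult_INR => count.
have n_gt0 : (0 < INR 'C(#|T|, p))%R by have := card_psets_large; have := pos_INR k; lra.
apply: (Rmult_le_reg_l _ _ _ n_gt0); rewrite -Rmult_assoc Rinv_r ?Rmult_1_l //; lra.
Qed.

Theorem prob_good_ge_lower_bound : (lower_bound #|T| p k <= prob_good p L)%R.
Proof.
set n := 'C(#|T|, p).
have n_large := card_psets_large; rewrite -/n in n_large.
have k_ge0 := pos_INR k.
pose x := (2 / INR n)%R.
have xn : (x * INR n = 2)%R by rewrite /x; field; lra.
have x01 : (0 <= x <= 1)%R by split; [apply: Rdiv_le_0_compat; lra | nra].
have q_small : forall i, i \in forbidden ->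
    (/ INR n <= x * (1 - x) ^ #|[set j in forbidden | overlap i j]|)%R.
  move=> i i_forb; have := card_overlap i_forb; rewrite -/n.
  have := bernoulli_sub #|[set j in forbidden | overlap i j]| x01.
  have -> : (/ INR n = x / 2)%R by rewrite /x; field; lra.
  have := pos_INR #|[set j in forbidden | overlap i j]|; nra.
have lll := lopsided_local_lemma x01
  (fun i J i_forb _ => lopsided_forbidden (J := J) i_forb) q_small.
rewrite /prob_good good_perms_avoiding cardsT.
have perm_gt0 : (0 < INR #|{perm T}|)%R by apply/lt_0_INR/ltP/card_gt0P; exists 1%g.
apply: (Rmult_le_reg_r _ _ _ perm_gt0).
rewrite /Rdiv Rmult_assoc Rinv_l ?Rmult_1_r; last exact: Rgt_not_eq.
apply: Rle_trans lll; apply: Rmult_le_compat_r; first lra.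
have base : (0 <= 1 - INR k * x <= (1 - x) ^ k)%R by split; [nra | exact: bernoulli_sub].
apply: Rle_trans (_ : ((1 - x) ^ k) ^ n <= _)%R.
  rewrite /lower_bound -/n (_ : 2 * INR k / INR n = INR k * x)%R; last by rewrite /x; field; lra.
  exact: pow_incr.
rewrite -pow_mult; apply: pow_le1_decr; first lra.
by rewrite multE mulnC card_forbidden.
Qed.

End AvoidingForbiddenImages.

Lemma prob_good_empty_sets (T : finType) (k : nat) (L : {set T} -> {set {set T}}) :
  (#|L set0| <= k)%N -> (lower_bound #|T| 0 k <= prob_good 0 L)%R.
Proof.
move=> L0_small; rewrite /lower_bound bin0 /= Rmult_1_r.
have perm_gt0 : (0 < INR #|[set: {perm T}]|)%R.
  by apply/lt_0_INR/ltP/card_gt0P; exists 1%g; rewrite inE.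
case: k L0_small => [|k] L0_small; last first.
  apply: Rle_trans (Rdiv_le_0_compat (pos_INR _) perm_gt0).
  by rewrite S_INR; have := pos_INR k; lra.
rewrite /prob_good (_ : good_perms 0 L = [set: {perm T}]).
  by rewrite /Rdiv Rinv_r /=; [lra | exact: Rgt_not_eq].
apply/setP => s; rewrite !inE; apply/forallP => S; apply/implyP => /eqP /cards0_eq ->.
by move: L0_small; rewrite leqn0 cards_eq0 => /eqP ->; rewrite inE.
Qed.

Theorem lemma1 (p k : nat) (alpha : R) :
  (alpha < 1)%R ->
  (exists N : nat,
     forall (T : finType) (L : {set T} -> {set {set T}}),
       (N <= #|T|)%N ->
       (forall S : {set T}, #|S| = p ->
          (#|L S| <= k)%N /\ (forall A : {set T}, A \in L S -> #|A| = p)) ->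
       (forall A : {set T}, #|A| = p ->
          (INR #|[set S : {set T} | (#|S| == p) && (A \in L S)]|
             <= Rpower (INR #|T|) alpha)%R) ->
       (lower_bound #|T| p k <= prob_good p L)%R)
  /\
  ((0 < p)%N ->
     Un_cv (fun r : nat => lower_bound r p k) (exp (- (2 * INR k)))).
Proof.
move=> alpha_lt1; split; last first.
  move=> p_gt0; apply: (cv_one_sub_div_pow (c := 2 * INR k) (u := fun r => 'C(r, p))).
    by have := pos_INR k; lra.
  move=> M; exists (maxn p (M * p)) => r; rewrite geq_max => /andP [le_pr le_Mpr].
  rewrite -(leq_pmul2r p_gt0) [X in (_ <= X)%N]mulnC; apply: leq_trans le_Mpr _.
  by apply: leq_mul_bin; rewrite p_gt0 le_pr.
have [->|p_gt0] := posnP p.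
  by exists 0%N => T L _ L_small _; apply: prob_good_empty_sets; case: (L_small set0 (cards0 _)).
have p_gt0R : (0 < INR p)%R by apply/lt_0_INR/ltP.
have K_gt0 : (0 < 8 * (INR p * INR p))%R by nra.
have [N0 N0_large] := Rpower_sublinear alpha_lt1 K_gt0.
exists (maxn N0 (maxn (8 * p * p * k) (p * (2 * k + 3)))) => T L.
rewrite !geq_max => /and3P [/N0_large rho_small k_small many] L_small L_rare.
apply: (prob_good_ge_lower_bound p_gt0 L_small L_rare).
- exact/Rlt_le/exp_pos.
- have le_pT : (p <= #|T|)%N by apply: leq_trans many; rewrite leq_pmulr // addn3.
  rewrite -(leq_pmul2l p_gt0); apply: leq_trans many _.
  by apply: leq_mul_bin; rewrite p_gt0 le_pT.
- move/leP/le_INR: k_small; rewrite -!multE !mult_INR /=; move: rho_small; set r := INR #|T|; lra.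
Qed.
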